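(* Let $C$ be a binary linear self-dual code of length $n$ with exact weight enumerator $W$ and derivatives $W_{<t>}$. Then for every integer $t$ with $0\le t\le n$, $W_{<t>}$ lies in the eigenspace of the eigenvalue $1$ of $K^{[n-t]}$, i.e. $W_{<t>}K^{[n-t]}=W_{<t>}$ (with $W_{<t>}$ regarded as a row vector and $K^{[0]}=[1]$).
   Context: $F=\{0,1\}$ is the binary field. A binary linear self-dual code $C$ of length $n$ is a linear subspace of $F^n$ of dimension $n/2$ equal to its orthogonal complement under the standard dot product. The exact weight enumerator of $C$ is the row vector $W\in\mathbb{Q}^{2^n}$ whose entries are labeled by the vectors of $F^n$ in lexicographic order, with $W[v]=1$ if $v\in C$ and $W[v]=0$ otherwise. Let $\rho=\sqrt2-1$. For $0\le t\le n$, the $t$-th derivative of $W$ is the row vector $W_{<t>}$ of length $2^{n-t}$ with entries labeled (in lexicographic order) by $v\in F^{n-t}$ given by $W_{<t>}[v]=\sum_{u\in F^t}\rho^{wt(u)}W[uv]$, where $wt(u)$ is the Hamming weight of $u$ and $uv$ is the concatenation of $u$ and $v$. $K=\frac{1}{\sqrt2}\begin{bmatrix}1&1\\1&-1\end{bmatrix}$, $K^{[1]}=K$, $K^{[m]}=K^{[m-1]}\otimes K$ (Kronecker product). *)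

From HB Require Import structures.
From mathcomp Require Import all_boot all_order all_algebra.
Set Implicit Arguments. Unset Strict Implicit. Unset Printing Implicit Defensive.
Import Order.TTheory GRing.Theory Num.Theory.
Local Open Scope ring_scope.

(* C is a binary linear self-dual code of length n: a linear subspace
   (over F_2: contains 0 and closed under +) of dimension n/2
   (|C|^2 = 2^n) that equals its orthogonal complement for the standard
   dot product  v . c = v *m c^T. *)
Definition self_dual (n : nat) (C : {set 'rV['F_2]_n}) : Prop :=
  [/\ 0 \in C,
      {in C &, forall u v, u + v \in C},
      (#|C| ^ 2 = 2 ^ n)%N &
      forall v : 'rV['F_2]_n, (v \in C) = [forall c in C, v *m c^T == 0]].

Lemma pow2_gt0 (m : nat) : (0 < 2 ^ m)%N.
Proof. by rewrite expn_gt0. Qed.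

(* Lexicographic labelling of F^m by 'I_(2^m): v_1 is the most
   significant bit. *)
Definition lexnum (m : nat) (v : 'rV['F_2]_m) : nat :=
  \sum_(i < m) ((v 0%R i != 0%R) * 2 ^ (m - i.+1))%N.

Definition idx_of_vec (m : nat) (v : 'rV['F_2]_m) : 'I_(2 ^ m) :=
  Ordinal (ltn_pmod (lexnum v) (pow2_gt0 m)).

Definition vec_of_idx (m : nat) (k : 'I_(2 ^ m)) : 'rV['F_2]_m :=
  \row_(i < m) ((odd (k %/ 2 ^ (m - i.+1)))%:R : 'F_2).

Definition wt (m : nat) (u : 'rV['F_2]_m) : nat := #|[pred i | u 0 i != 0]|.

Lemma concat_lt (n t : nat) (j : 'I_n) : (t <= j)%N -> (j - t < n - t)%N.
Proof. by move=> h; rewrite ltn_sub2r // (leq_ltn_trans h). Qed.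

Definition concat (n t : nat) (u : 'rV['F_2]_t) (v : 'rV['F_2]_(n - t))
  : 'rV['F_2]_n :=
  \row_(j < n) match ltnP j t with
               | LtnNotGeq h => u 0 (Ordinal h)
               | GeqNotLtn h => v 0 (Ordinal (concat_lt h))
               end.

Section Enum.
Variable R : rcfType.

Definition rho : R := Num.sqrt 2 - 1.

Definition W (n : nat) (C : {set 'rV['F_2]_n}) : 'rV[R]_(2 ^ n) :=
  \row_(k < 2 ^ n) (if vec_of_idx k \in C then 1 else 0).

Definition Wder (n : nat) (C : {set 'rV['F_2]_n}) (t : nat)
  : 'rV[R]_(2 ^ (n - t)) :=
  \row_(k < 2 ^ (n - t))
     \sum_(u : 'rV['F_2]_t)
        rho ^+ wt u * W C 0 (idx_of_vec (concat u (vec_of_idx k))).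

(* Kronecker product, with lexicographic index (i1,i2) |-> i1 * m2 + i2 *)
Lemma kron_div (m1 m2 : nat) (i : 'I_(m1 * m2)) : (i %/ m2 < m1)%N.
Proof.
case: m2 i => [|m2] i; first by case: i => i; rewrite muln0.
by rewrite ltn_divLR // ltn_ord.
Qed.

Lemma kron_mod (m1 m2 : nat) (i : 'I_(m1 * m2)) : (i %% m2 < m2)%N.
Proof.
case: m2 i => [|m2] i; first by case: i => i; rewrite muln0.
by rewrite ltn_pmod.
Qed.

Definition kron (m1 n1 m2 n2 : nat) (A : 'M[R]_(m1, n1)) (B : 'M[R]_(m2, n2))
  : 'M[R]_(m1 * m2, n1 * n2) :=
  \matrix_(i < m1 * m2, j < n1 * n2)
     (A (Ordinal (kron_div i)) (Ordinal (kron_div j))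
      * B (Ordinal (kron_mod i)) (Ordinal (kron_mod j))).

Definition Kmat : 'M[R]_2 :=
  (Num.sqrt 2)^-1 *: \matrix_(i < 2, j < 2)
     (if (i == 1 :> nat) && (j == 1 :> nat) then -1 else 1).

Fixpoint Kpow (m : nat) : 'M[R]_(2 ^ m) :=
  match m with
  | 0 => 1%:M
  | m'.+1 => castmx (esym (expnSr 2 m'), esym (expnSr 2 m'))
                    (kron (Kpow m') Kmat)
  end.

End Enum.

(* Put r = (1, rho).  Coordinatewise, W_<t> = W (r^(x)t (x) I), and r is
   fixed by the symmetric matrix K since sqrt 2 * rho = 1 - rho; summed over
   F^t this reads  sum_u rho^wt(u) (-1)^(u.y) = sqrt2^t rho^wt(y).  Expanding
   the indicator of C by the MacWilliams identity of a self-dual code,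
   1_C(x) = 2^(-n/2) sum_(y in C) (-1)^(x.y), and summing out the first t
   coordinates then gives W_<t> = W_<t> K^[n-t]. *)
From HB Require Import structures.
From mathcomp Require Import all_boot all_order all_algebra.
From mathcomp Require Import zify ring.
Import Order.TTheory GRing.Theory Num.Theory.
Set Implicit Arguments. Unset Strict Implicit. Unset Printing Implicit Defensive.

Lemma modn_pow2S (m k : nat) : k %% 2 ^ m.+1 = odd k + 2 * (k %/ 2 %% 2 ^ m).
Proof.
have oddk_le1 : odd k <= 1 by case: (odd k).
have mod_lt := ltn_pmod (k %/ 2) (pow2_gt0 m).
rewrite {1}(divn_eq k 2) {1}(divn_eq (k %/ 2) (2 ^ m)) modn2 expnS.
rewrite mulnDl -mulnA [2 ^ m * 2]mulnC -addnA modnMDl modn_small; lia.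
Qed.

Lemma sum_bits_pow2 (m k : nat) :
  \sum_(i < m) odd (k %/ 2 ^ i) * 2 ^ i = k %% 2 ^ m.
Proof.
elim: m k => [|m IHm] k; first by rewrite big_ord0 expn0 modn1.
rewrite big_ord_recl /= expn0 divn1 muln1 modn_pow2S -IHm big_distrr /=.
by congr (_ + _); apply: eq_bigr => i _; rewrite /bump /= add1n expnS divnMA mulnCA.
Qed.

Definition bits (m k : nat) : 'rV['F_2]_m :=
  \row_(i < m) ((odd (k %/ 2 ^ (m - i.+1)))%:R : 'F_2)%R.

Lemma lexnum_bits (m k : nat) : lexnum (bits m k) = k %% 2 ^ m.
Proof.
rewrite /lexnum -sum_bits_pow2 (reindex_inj rev_ord_inj) /=.
apply: eq_bigr => i _; rewrite mxE.
have -> : m - (m - i.+1).+1 = i by have := ltn_ord i; lia.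
by case: (odd _).
Qed.

Lemma vec_of_idxK (m : nat) : cancel (@vec_of_idx m) (@idx_of_vec m).
Proof.
move=> k; apply: val_inj => /=.
by rewrite [lexnum _](lexnum_bits m k) modn_mod modn_small.
Qed.

Lemma idx_of_vecK (m : nat) : cancel (@idx_of_vec m) (@vec_of_idx m).
Proof.
have vec_inj : injective (@vec_of_idx m) := can_inj (@vec_of_idxK m).
have card_rV : #|{: 'rV['F_2]_m}| = 2 ^ m by rewrite card_mx card_Fp // mul1n.
move=> x; have := inj_card_onto vec_inj; rewrite card_ord card_rV leqnn.
by move=> /(_ isT x) /codomP [k ->]; rewrite vec_of_idxK.
Qed.

Local Open Scope ring_scope.

Lemma F2_cases (a : 'F_2) : a = 0 \/ a = 1.
Proof. by case: a => [[|[|a]] Ha] //; [left|right]; apply/val_inj. Qed.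

Lemma pchar_F2 : (2 \in [pchar 'F_2])%N.
Proof. exact: pchar_Fp. Qed.

Lemma addrK_F2 (m : nat) (x y : 'rV['F_2]_m) : x + y + y = x.
Proof. by apply/rowP => i; rewrite !mxE (addrK_pchar2 pchar_F2). Qed.

Lemma sum_F2 (V : zmodType) (G : 'F_2 -> V) : \sum_(a : 'F_2) G a = G 0 + G 1.
Proof.
rewrite (bigD1 0) //= (bigD1 1) //= big_pred0 ?addr0 // => a.
by case: (F2_cases a) => ->.
Qed.

Definition signF2 (R : nzRingType) (a : 'F_2) : R := if a == 0 then 1 else -1.

Lemma signF2_0 (R : nzRingType) : signF2 R 0 = 1.
Proof. by rewrite /signF2 eqxx. Qed.

Lemma signF2_1 (R : nzRingType) : signF2 R 1 = -1.
Proof. by []. Qed.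

Lemma signF2D (R : nzRingType) (a b : 'F_2) :
  signF2 R (a + b) = signF2 R a * signF2 R b.
Proof.
case: (F2_cases a) => ->; case: (F2_cases b) => ->;
  by rewrite ?add0r ?addr0 ?(addrr_pchar2 pchar_F2) ?signF2_0 ?signF2_1
             ?mul1r ?mulr1 ?mulrNN ?mulr1.
Qed.

Definition dot (m : nat) (x y : 'rV['F_2]_m) : 'F_2 := (x *m y^T) 0 0.

Lemma dotE (m : nat) (x y : 'rV['F_2]_m) : dot x y = \sum_i x 0 i * y 0 i.
Proof. by rewrite /dot mxE; apply: eq_bigr => i _; rewrite mxE. Qed.

Lemma dotC (m : nat) (x y : 'rV['F_2]_m) : dot x y = dot y x.
Proof. by rewrite !dotE; apply: eq_bigr => i _; rewrite mulrC. Qed.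

Lemma dotDr (m : nat) (x y z : 'rV['F_2]_m) : dot z (x + y) = dot z x + dot z y.
Proof. by rewrite !dotE -big_split; apply: eq_bigr => i _; rewrite mxE mulrDr. Qed.

Lemma signF2_dot (R : nzRingType) (m : nat) (u y : 'rV['F_2]_m) :
  signF2 R (dot u y) = \prod_i signF2 R (u 0 i * y 0 i).
Proof. by rewrite dotE (big_morph (signF2 R) (@signF2D R) (signF2_0 R)). Qed.

Lemma dot_bitsS (m i j : nat) : dot (bits m.+1 i) (bits m.+1 j) =
  dot (bits m (i %/ 2)) (bits m (j %/ 2)) + (odd i)%:R * (odd j)%:R.
Proof.
rewrite !dotE big_ord_recr /= !mxE subnn expn0 !divn1; congr (_ + _).
apply: eq_bigr => l _; rewrite !mxE /=.
have -> : (m.+1 - l.+1 = (m - l.+1).+1)%N by have := ltn_ord l; lia.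
by rewrite !expnS !divnMA.
Qed.

Lemma Kpow_entry (R : rcfType) (m : nat) (i j : 'I_(2 ^ m)) :
  Kpow R m i j =
  (Num.sqrt 2)^-1 ^+ m * signF2 R (dot (vec_of_idx i) (vec_of_idx j)).
Proof.
rewrite -![vec_of_idx _]/(bits _ _).
elim: m i j => [|m IHm] i j.
  have -> : i = j by apply/val_inj; case: i j => [[|?] ?] [[|?] ?].
  by rewrite /= mxE eqxx expr0 mul1r dotE big_ord0 signF2_0.
rewrite /= castmxE !mxE IHm /= dot_bitsS signF2D exprS !modn2.
by case: (odd i); case: (odd j);
  rewrite /= ?mulr0 ?mul0r ?mulr1 ?signF2_0 ?signF2_1; ring.
Qed.

Lemma sumr_opp_involution (R : numDomainType) (T : finType) (P : pred T)
    (f : T -> T) (g : T -> R) :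
  involutive f -> (forall x, P (f x) = P x) -> (forall x, g (f x) = - g x) ->
  \sum_(x | P x) g x = 0.
Proof.
move=> f_inv Pf gf.
have sum_opp : \sum_(x | P x) g x = - \sum_(x | P x) g x.
  rewrite {1}(reindex_inj (inv_inj f_inv)) /= -sumrN.
  by apply: eq_big => [x|x _]; rewrite ?Pf ?gf.
have : (\sum_(x | P x) g x) *+ 2 = 0 by rewrite mulr2n {1}sum_opp addNr.
by move/eqP; rewrite mulrn_eq0 => /eqP.
Qed.

Lemma sqrt2_neq0 (R : rcfType) : Num.sqrt (2 : R) != 0.
Proof. by rewrite sqrtr_eq0 -ltNge ltr0n. Qed.

Section SelfDualCode.
Variables (R : rcfType) (n : nat) (C : {set 'rV['F_2]_n}).
Hypothesis C_self_dual : self_dual C.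

Lemma self_dual_card : #|C|%:R = Num.sqrt (2 : R) ^+ n.
Proof.
case: C_self_dual => _ _ cardC _.
apply/eqP; rewrite -(@eqrXn2 _ 2) ?ler0n ?exprn_ge0 ?sqrtr_ge0 //.
by rewrite -natrX cardC -exprM mulnC exprM sqr_sqrtr ?ler0n // natrX.
Qed.

Lemma sum_signF2_self_dual (x : 'rV['F_2]_n) :
  \sum_(y in C) signF2 R (dot x y) = (x \in C)%:R * #|C|%:R.
Proof.
case: C_self_dual => _ C_add _ C_perp.
case xC: (x \in C).
  rewrite mul1r -sumr_const; apply: eq_bigr => y yC.
  move: xC; rewrite C_perp => /forall_inP /(_ y yC) /eqP x_perp_y.
  by rewrite /dot x_perp_y mxE signF2_0.
move: xC; rewrite C_perp mul0r => /negbT /forall_inPn [c cC x_not_perp_c].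
have dot_xc : dot x c = 1.
  case: (F2_cases (dot x c)) => // dot0; case/eqP: x_not_perp_c.
  by apply/matrixP => i j; rewrite !ord1 [RHS]mxE.
apply: (@sumr_opp_involution _ _ _ (fun y => y + c)).
- by move=> y; rewrite addrK_F2.
- move=> y; apply/idP/idP => [ycC|yC]; last exact: C_add yC cC.
  by rewrite -(addrK_F2 y c); apply: C_add ycC cC.
- by move=> y; rewrite dotDr dot_xc signF2D signF2_1 mulrN1.
Qed.

Lemma self_dual_indicator (x : 'rV['F_2]_n) :
  (x \in C)%:R =
  (Num.sqrt 2)^-1 ^+ n * \sum_y (y \in C)%:R * signF2 R (dot x y).
Proof.
rewrite (eq_bigr (fun y => if y \in C then signF2 R (dot x y) else 0)); last first.
  by move=> y _; case: (y \in C); rewrite ?mul1r ?mul0r.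
rewrite -big_mkcond sum_signF2_self_dual self_dual_card mulrCA -exprMn.
by rewrite mulVf ?sqrt2_neq0 // expr1n mulr1.
Qed.

End SelfDualCode.

Lemma exprn_wt (R : nzRingType) (m : nat) (x : R) (u : 'rV['F_2]_m) :
  x ^+ wt u = \prod_i (if u 0 i != 0 then x else 1).
Proof. by rewrite /wt -prodr_const big_mkcond. Qed.

Lemma sum_rV_ffun (V : zmodType) (m : nat) (G : 'rV['F_2]_m -> V) :
  \sum_(u : 'rV['F_2]_m) G u = \sum_(f : {ffun 'I_m -> 'F_2}) G (\row_i f i).
Proof.
rewrite (reindex (fun f : {ffun 'I_m -> 'F_2} => \row_i f i)) //.
exists (fun u : 'rV['F_2]_m => [ffun i => u 0 i]) => [f _|u _].
  by apply/ffunP => i; rewrite ffunE mxE.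
by apply/rowP => i; rewrite mxE ffunE.
Qed.

(* The vector (1, rho) is fixed by K. *)
Lemma sqrt2_rho (R : rcfType) : Num.sqrt 2 * rho R = 1 - rho R.
Proof. by rewrite /rho mulrBr mulr1 -expr2 sqr_sqrtr ?ler0n //; ring. Qed.

Lemma sum_rho_signF2 (R : rcfType) (t : nat) (y : 'rV['F_2]_t) :
  \sum_(u : 'rV['F_2]_t) rho R ^+ wt u * signF2 R (dot u y) =
  Num.sqrt 2 ^+ t * rho R ^+ wt y.
Proof.
under eq_bigr => u _ do rewrite exprn_wt signF2_dot -big_split /=.
rewrite sum_rV_ffun.
under eq_bigr => f _ do under eq_bigr => i _ do rewrite mxE.
rewrite -(bigA_distr_bigA
  (fun i a => (if a != 0 then rho R else 1) * signF2 R (a * y 0 i))) /=.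
have -> : Num.sqrt (2 : R) ^+ t = \prod_(i < t) Num.sqrt 2.
  by rewrite prodr_const card_ord.
rewrite exprn_wt -big_split /=.
apply: eq_bigr => i _; rewrite sum_F2 eqxx mul0r signF2_0 mulr1 mul1r.
case: (F2_cases (y 0 i)) => ->; rewrite ?mulr0 ?mulr1 ?signF2_0 ?signF2_1 /=.
  by rewrite /rho; ring.
by rewrite mulrN1 sqrt2_rho.
Qed.

Section Concat.
Variables (n t : nat).
Hypothesis le_tn : (t <= n)%N.

Lemma concatEl (u : 'rV['F_2]_t) (v : 'rV['F_2]_(n - t)) (i : 'I_n) (k : 'I_t) :
  val i = val k -> concat u v 0 i = u 0 k.
Proof.
move=> ik; rewrite mxE; case: ltnP => [lt_it|le_ti].
  by congr (u 0 _); apply: val_inj.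
by move: (ltn_ord k); rewrite -ik ltnNge le_ti.
Qed.

Lemma concatEr (u : 'rV['F_2]_t) (v : 'rV['F_2]_(n - t)) (i : 'I_n)
    (k : 'I_(n - t)) :
  val i = (t + k)%N -> concat u v 0 i = v 0 k.
Proof.
move=> ik; rewrite mxE; case: ltnP => [lt_it|le_ti].
  by exfalso; move: lt_it; rewrite ik ltnNge leq_addr.
by congr (v 0 _); apply: val_inj => /=; rewrite ik addKn.
Qed.

Lemma sum_concat (V : zmodType) (G : 'rV['F_2]_n -> V) :
  \sum_(x : 'rV['F_2]_n) G x =
  \sum_(u : 'rV['F_2]_t) \sum_(v : 'rV['F_2]_(n - t)) G (concat u v).
Proof.
have lt_tr (i : 'I_(n - t)) : (t + i < n)%N by rewrite -ltn_subRL ltn_ord.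
pose lsub (x : 'rV['F_2]_n) : 'rV['F_2]_t := \row_i x 0 (widen_ord le_tn i).
pose rsub (x : 'rV['F_2]_n) : 'rV['F_2]_(n - t) := \row_i x 0 (Ordinal (lt_tr i)).
rewrite pair_big /=.
rewrite (reindex (fun p : 'rV_t * 'rV_(n - t) => concat p.1 p.2)) //.
exists (fun x => (lsub x, rsub x)) => [[u v] _|x _] /=.
  congr (_, _); apply/rowP => i; rewrite mxE.
    exact: concatEl.
  exact: concatEr.
apply/rowP => j; case: (ltnP j t) => [lt_jt|le_tj].
  by rewrite (concatEl _ _ (k := Ordinal lt_jt)) // mxE; congr (x 0 _); apply: val_inj.
rewrite (concatEr _ _ (k := Ordinal (concat_lt le_tj))) /= ?subnKC // mxE.
by congr (x 0 _); apply: val_inj => /=; rewrite subnKC.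
Qed.

Lemma dot_concat (u y : 'rV['F_2]_t) (v z : 'rV['F_2]_(n - t)) :
  dot (concat u v) (concat y z) = dot u y + dot v z.
Proof.
have ntn : (t + (n - t) = n)%N by rewrite subnKC.
rewrite !dotE (reindex (cast_ord ntn)) /=; last first.
  by exists (cast_ord (esym ntn)) => i _; apply: val_inj.
rewrite big_split_ord /=; congr (_ + _); apply: eq_bigr => i _.
  by rewrite !(concatEl _ _ (k := i)).
by rewrite !(concatEr _ _ (k := i)).
Qed.

End Concat.

Definition Wder_at (R : rcfType) (n : nat) (C : {set 'rV['F_2]_n}) (t : nat)
    (v : 'rV['F_2]_(n - t)) : R :=
  \sum_(u : 'rV['F_2]_t) rho R ^+ wt u * (concat u v \in C)%:R.
Arguments Wder_at R {n} C t v.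

Lemma WderE (R : rcfType) (n : nat) (C : {set 'rV['F_2]_n}) (t : nat)
    (k : 'I_(2 ^ (n - t))) :
  Wder R C t 0 k = Wder_at R C t (vec_of_idx k).
Proof.
rewrite mxE; apply: eq_bigr => u _; rewrite mxE idx_of_vecK.
by case: (_ \in C).
Qed.

Lemma sqrt2_invX_split (R : rcfType) (n t : nat) : (t <= n)%N ->
  (Num.sqrt (2 : R))^-1 ^+ n * Num.sqrt 2 ^+ t = (Num.sqrt 2)^-1 ^+ (n - t).
Proof.
move=> le_tn; rewrite -{1}(subnKC le_tn) exprD mulrAC -exprMn.
by rewrite mulVf ?sqrt2_neq0 // expr1n mul1r.
Qed.

(* Expand the indicator by self_dual_indicator, split each y as concat y1 y2,
   and sum out u with sum_rho_signF2. *)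
Lemma Wder_at_fourier (R : rcfType) (n : nat) (C : {set 'rV['F_2]_n}) (t : nat) :
  self_dual C -> (t <= n)%N -> forall v : 'rV['F_2]_(n - t),
  Wder_at R C t v =
  (Num.sqrt 2)^-1 ^+ (n - t) * \sum_w Wder_at R C t w * signF2 R (dot v w).
Proof.
move=> C_self_dual le_tn v.
rewrite -(sqrt2_invX_split R le_tn) /Wder_at -mulrA; set s := (Num.sqrt 2)^-1.
transitivity (s ^+ n * \sum_u \sum_y1 \sum_y2 rho R ^+ wt u *
  signF2 R (dot u y1) * ((concat y1 y2 \in C)%:R * signF2 R (dot v y2))).
  rewrite big_distrr /=; apply: eq_bigr => u _.
  rewrite (self_dual_indicator R C_self_dual) (sum_concat le_tn) mulrCA.
  congr (_ * _); rewrite big_distrr; apply: eq_bigr => y1 _.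
  rewrite big_distrr; apply: eq_bigr => y2 _.
  by rewrite /= dot_concat // signF2D; ring.
congr (_ * _); rewrite exchange_big /=.
transitivity (\sum_y1 \sum_y2 Num.sqrt 2 ^+ t * rho R ^+ wt y1 *
  ((concat y1 y2 \in C)%:R * signF2 R (dot v y2))).
  apply: eq_bigr => y1 _; rewrite exchange_big /=; apply: eq_bigr => y2 _.
  by rewrite -sum_rho_signF2 big_distrl.
rewrite exchange_big big_distrr /=; apply: eq_bigr => y2 _.
by rewrite big_distrl big_distrr /=; apply: eq_bigr => y1 _; ring.
Qed.

Theorem theorem6 (R : rcfType) (n : nat) (C : {set 'rV['F_2]_n}) :
  self_dual C ->
  forall t : nat, (t <= n)%N ->
    (Wder R C t) *m (Kpow R (n - t)) = Wder R C t.
Proof.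
move=> C_self_dual t le_tn; apply/rowP => k.
rewrite mxE WderE (Wder_at_fourier R C_self_dual le_tn) big_distrr /=.
rewrite (reindex (@idx_of_vec (n - t))) /=; last first.
  by exists (@vec_of_idx (n - t)) => [x _|j _]; rewrite ?idx_of_vecK ?vec_of_idxK.
apply: eq_bigr => w _.
by rewrite WderE Kpow_entry !idx_of_vecK dotC mulrCA.
Qed.
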